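(* Let $X=(X^{(1)},\dots,X^{(p)})\in\mathbb{R}^p$ be a random vector with finite second moments and strictly positive definite covariance matrix, let $\epsilon$ be a random variable with $E(\epsilon)=0$, $\mathrm{var}(\epsilon)=\sigma^2>0$, uncorrelated with $X^{(1)},\dots,X^{(p)}$, and let $Y=\delta+\sum_{j=1}^p\beta_jX^{(j)}+\epsilon$ with $\delta\in\mathbb{R}$, $\beta\in\mathbb{R}^p$. Suppose the distribution of $(X,Y)$ is partially faithful. Then the population PC-simple algorithm identifies the active set: $\mathcal{A}^{[m_{\mathrm{reach}}]}=\mathcal{A}=\{j=1,\dots,p;\ \beta_j\neq 0\}$.
   Context: $\rho(Z^{(1)},Z^{(2)}\mid W)$ denotes the population partial correlation; $X^{(\mathcal{S})}=\{X^{(j)};j\in\mathcal{S}\}$, $\{j\}^C=\{1,\dots,p\}\setminus\{j\}$. Partial faithfulness: for every $j$, if $\rho(Y,X^{(j)}\mid X^{(\mathcal{S})})=0$ for some $\mathcal{S}\subseteq\{j\}^C$ then $\rho(Y,X^{(j)}\mid X^{(\{j\}^C)})=0$. Population PC-simple algorithm: set $m=1$ and $\mathcal{A}^{[1]}=\{j:\mathrm{cor}(Y,X^{(j)})\neq 0\}$. Repeat: $m\leftarrow m+1$, $\mathcal{A}^{[m]}=\{j\in\mathcal{A}^{[m-1]}:\rho(Y,X^{(j)}\mid X^{(\mathcal{S})})\neq 0$ for all $\mathcal{S}\subseteq\mathcal{A}^{[m-1]}\setminus\{j\}$ with $|\mathcal{S}|=m-1\}$; until $|\mathcal{A}^{[m]}|\le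 m$. Define $m_{\mathrm{reach}}=\min\{m:|\mathcal{A}^{[m]}|\le m\}$. *)

From HB Require Import structures.
From mathcomp Require Import all_boot all_order all_algebra.
From mathcomp Require Import all_classical all_reals all_analysis.
Set Implicit Arguments.
Unset Strict Implicit.
Unset Printing Implicit Defensive.
Import Order.TTheory GRing.Theory Num.Theory.
Local Open Scope ring_scope.

Section PCsimple.
Context {d : measure_display} {T : measurableType d} {R : realType}
  (P : probability T R).

(* real-valued population covariance (finite under square integrability) *)
Definition cov (U V : T -> R) : R := fine (covariance P U V).

Definition cor (U V : T -> R) : R :=
  cov U V / Num.sqrt (cov U U * cov V V).

Context {p : nat}.

Definition covmx (X : 'I_p -> T -> R) : 'M[R]_p :=
  \matrix_(i, j) cov (X i) (X j).

(* covariance matrix of X^(S) (S enumerated in increasing order) *)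
Definition subcov (X : 'I_p -> T -> R) (S : {set 'I_p}) : 'M[R]_#|S| :=
  \matrix_(i, j) cov (X (enum_val i)) (X (enum_val j)).

Definition crosscov (U : T -> R) (X : 'I_p -> T -> R) (S : {set 'I_p})
  : 'rV[R]_#|S| := \row_i cov U (X (enum_val i)).

Definition pcov (U V : T -> R) (X : 'I_p -> T -> R) (S : {set 'I_p}) : R :=
  cov U V - (crosscov U X S *m invmx (subcov X S) *m (crosscov V X S)^T) 0 0.

Definition pcor (U V : T -> R) (X : 'I_p -> T -> R) (S : {set 'I_p}) : R :=
  pcov U V X S / Num.sqrt (pcov U U X S * pcov V V X S).

Definition partially_faithful (Y : T -> R) (X : 'I_p -> T -> R) : Prop :=
  forall j : 'I_p,
    (exists S : {set 'I_p}, S \subset [set~ j] /\ pcor Y (X j) X S = 0) ->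
    pcor Y (X j) X [set~ j] = 0.

(* pc_aux k = A^{[k+1]} of the population PC-simple algorithm *)
Fixpoint pc_aux (Y : T -> R) (X : 'I_p -> T -> R) (k : nat) : {set 'I_p} :=
  match k with
  | 0 => [set j | cor Y (X j) != 0]
  | k'.+1 =>
      let A := pc_aux Y X k' in
      [set j in A | [forall S : {set 'I_p},
          ((S \subset A :\ j) && (#|S| == k'.+1)) ==> (pcor Y (X j) X S != 0)]]
  end.

(* A^{[m]} for m >= 1 *)
Definition pcA (Y : T -> R) (X : 'I_p -> T -> R) (m : nat) : {set 'I_p} :=
  pc_aux Y X m.-1.

Lemma mreach_ex (Y : T -> R) (X : 'I_p -> T -> R) :
  exists m, (0 < m)%N && (#|pcA Y X m| <= m)%N.
Proof.
exists p.+1; rewrite /=.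
by apply: leq_trans (max_card _) _; rewrite card_ord leqnSn.
Qed.

Definition mreach (Y : T -> R) (X : 'I_p -> T -> R) : nat :=
  ex_minn (mreach_ex Y X).

End PCsimple.

From HB Require Import structures.
From mathcomp Require Import all_boot all_order all_algebra.
From mathcomp Require Import all_classical all_reals all_analysis.
Set Implicit Arguments.
Unset Strict Implicit.
Unset Printing Implicit Defensive.
Import Order.TTheory GRing.Theory Num.Theory.
Local Open Scope ring_scope.

(* In the linear model, Cov(Y, X^(j) | X^(S)) is the j-th entry of b Sig_S,
   where b = beta and Sig_S is the covariance matrix of the residual of X
   after regressing it on X^(S); the rows of Sig_S indexed by S vanish.
   Conditioning on the active set A therefore separates Y from every inactive
   X^(j), while conditioning on all other variables leaves beta_j times the
   positive residual variance of X^(j), so an active X^(j) is not separated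
   by {j}^C and, by partial faithfulness, by no set at all.  Hence the
   PC-simple algorithm never drops an active variable, and at step |A| it
   tests the set A itself and drops every inactive one. *)

Section ResidualCovariance.
Context {R : rcfType} {n : nat} (Sig : 'M[R]_n).
Hypothesis Sig_sym : Sig^T = Sig.
Hypothesis Sig_pd : forall v : 'rV_n, v != 0 -> 0 < (v *m Sig *m v^T) 0 0.
Implicit Types S : {set 'I_n}.

Definition selmx S : 'M[R]_(n, #|S|) :=
  \matrix_(k, i) (k == enum_val i)%:R.

Lemma mulmx_selmx m S (A : 'M[R]_(m, n)) r i :
  (A *m selmx S) r i = A r (enum_val i).
Proof.
rewrite mxE (bigD1 (enum_val i)) //= mxE eqxx mulr1 big1 ?addr0 // => k /negbTE nk.
by rewrite mxE nk mulr0.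
Qed.

Lemma trselmx_mulmx m S (A : 'M[R]_(n, m)) i c :
  ((selmx S)^T *m A) i c = A (enum_val i) c.
Proof.
rewrite mxE (bigD1 (enum_val i)) //= !mxE eqxx mul1r big1 ?addr0 // => k /negbTE nk.
by rewrite !mxE nk mul0r.
Qed.

Lemma mulmx_trselmx_notin m S (A : 'M[R]_(m, #|S|)) r k :
  k \notin S -> (A *m (selmx S)^T) r k = 0.
Proof.
move=> kS; rewrite mxE big1 // => i _; rewrite !mxE.
by case: eqP => [kE | _]; [rewrite kE enum_valP in kS | rewrite mulr0].
Qed.

Lemma trselmxK S : (selmx S)^T *m selmx S = 1%:M.
Proof.
by apply/matrixP => i j; rewrite trselmx_mulmx !mxE (inj_eq enum_val_inj).
Qed.

Lemma selmx_supported S (a : 'rV_n) : (forall k, k \notin S -> a 0 k = 0) ->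
  a *m selmx S *m (selmx S)^T = a.
Proof.
move=> aS; apply/rowP => k.
have [kS | kS] := boolP (k \in S); last by rewrite mulmx_trselmx_notin // aS.
rewrite mxE (bigD1 (enum_rank_in kS k)) //= mulmx_selmx !mxE enum_rankK_in //.
rewrite eqxx mulr1 big1 ?addr0 // => i ik; rewrite !mxE.
case: eqP => [kE | _]; last by rewrite mulr0.
by case/eqP: ik; apply: enum_val_inj; rewrite enum_rankK_in.
Qed.

Definition subcovmx S := (selmx S)^T *m Sig *m selmx S.

Lemma subcovmx_sym S : (subcovmx S)^T = subcovmx S.
Proof. by rewrite /subcovmx !trmx_mul trmxK Sig_sym mulmxA. Qed.

Lemma subcovmx_unit S : subcovmx S \in unitmx.
Proof.
rewrite -row_free_unit; apply: inj_row_free => v vG0.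
set u := v *m (selmx S)^T.
have quad0 : (u *m Sig *m u^T) 0 0 = 0.
  have -> : u *m Sig *m u^T = v *m subcovmx S *m v^T.
    by rewrite /u /subcovmx trmx_mul trmxK !mulmxA.
  by rewrite vG0 mul0mx mxE.
have u0 : u = 0.
  by have [// | nz] := eqVneq u 0; move: (Sig_pd nz); rewrite quad0 ltxx.
by rewrite -[v]mulmx1 -(trselmxK S) mulmxA -/u u0 mul0mx.
Qed.

(* Locked so that [mulmxA] and [trmx_mul] do not unfold it. *)
Definition projmx S := locked (selmx S *m invmx (subcovmx S) *m (selmx S)^T).

Lemma projmxE S : projmx S = selmx S *m invmx (subcovmx S) *m (selmx S)^T.
Proof. by rewrite /projmx -lock. Qed.

(* Covariance of the residual of a linear regression of X on X^(S). *)
Definition rescovmx S := Sig - Sig *m projmx S *m Sig.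

Lemma projmx_sym S : (projmx S)^T = projmx S.
Proof. by rewrite projmxE !trmx_mul trmxK trmx_inv subcovmx_sym mulmxA. Qed.

Lemma trselmx_projmx S : (selmx S)^T *m Sig *m projmx S = (selmx S)^T.
Proof.
by rewrite projmxE !mulmxA -/(subcovmx S) mulmxV ?subcovmx_unit // mul1mx.
Qed.

Lemma projmx_idem S : projmx S *m Sig *m projmx S = projmx S.
Proof.
rewrite {1}projmxE -!mulmxA [X in invmx _ *m X]mulmxA trselmx_projmx.
by rewrite projmxE !mulmxA.
Qed.

Lemma trselmx_rescovmx S : (selmx S)^T *m rescovmx S = 0.
Proof. by rewrite /rescovmx mulmxBr !mulmxA trselmx_projmx subrr. Qed.

Lemma rescovmx_factor S :
  rescovmx S = (1%:M - Sig *m projmx S) *m Sig *m (1%:M - Sig *m projmx S)^T.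
Proof.
rewrite raddfB /= trmx1 trmx_mul Sig_sym projmx_sym.
rewrite !mulmxBl !mul1mx !mulmxBr !mulmx1.
rewrite -!mulmxA (mulmxA (projmx S) Sig (projmx S *m Sig)) (mulmxA (projmx S *m Sig)).
by rewrite projmx_idem /rescovmx !mulmxA subrr subr0.
Qed.

Lemma rescovmx_quadE S (a : 'rV_n) :
  a *m rescovmx S *m a^T = (a *m (1%:M - Sig *m projmx S)) *m Sig
                            *m (a *m (1%:M - Sig *m projmx S))^T.
Proof. by rewrite rescovmx_factor trmx_mul !mulmxA. Qed.

Lemma rescovmx_quad_ge0 S (a : 'rV_n) : 0 <= (a *m rescovmx S *m a^T) 0 0.
Proof.
rewrite rescovmx_quadE; set u := a *m _.
by have [-> | /Sig_pd/ltW //] := eqVneq u 0; rewrite !mul0mx mxE.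
Qed.

Lemma rescovmx_delta_gt0 S j : j \notin S ->
  0 < ((delta_mx 0 j : 'rV_n) *m rescovmx S *m (delta_mx 0 j : 'rV_n)^T) 0 0.
Proof.
move=> jS; rewrite rescovmx_quadE; apply: Sig_pd; apply/eqP => /rowP/(_ j).
rewrite mulmxBr mulmx1 projmxE !mulmxA [_ 0 j]mxE [X in _ + X]mxE.
by rewrite mulmx_trselmx_notin // !mxE /= eqxx subr0 => /eqP; rewrite oner_eq0.
Qed.

Lemma rescovmx_supported S (a : 'rV_n) : (forall k, k \notin S -> a 0 k = 0) ->
  a *m rescovmx S = 0.
Proof.
by move=> /selmx_supported <-; rewrite -mulmxA trselmx_rescovmx mulmx0.
Qed.

Lemma rescovmx_setC1 j (a : 'rV_n) :
  (a *m rescovmx [set~ j] *m (delta_mx 0 j : 'rV_n)^T) 0 0 =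
  a 0 j * ((delta_mx 0 j : 'rV_n) *m rescovmx [set~ j]
             *m (delta_mx 0 j : 'rV_n)^T) 0 0.
Proof.
have aE : a = (a - a 0 j *: delta_mx 0 j) + a 0 j *: delta_mx 0 j by rewrite subrK.
rewrite {1}aE mulmxDl rescovmx_supported ?add0r; last first.
  by move=> k; rewrite !inE negbK => /eqP ->; rewrite !mxE !eqxx mulr1 subrr.
by rewrite -!scalemxAl mxE.
Qed.

Lemma quad_rescovmxE S (a c : 'rV_n) :
  (a *m Sig *m c^T) 0 0
    - (a *m Sig *m selmx S *m invmx (subcovmx S) *m (c *m Sig *m selmx S)^T) 0 0
  = (a *m rescovmx S *m c^T) 0 0.
Proof.
rewrite !trmx_mul Sig_sym /rescovmx mulmxBr mulmxBl projmxE !mulmxA.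
by rewrite [RHS]mxE [X in _ = _ + X]mxE.
Qed.

End ResidualCovariance.

Section Covariance.
Context {d : measure_display} {T : measurableType d} {R : realType}
  (P : probability T R).
Local Notation L2 := (Lfun P 2%:E).
Implicit Types U V Z : T -> R.

Lemma covariance_fin_num2 U V : U \in L2 -> V \in L2 ->
  covariance P U V \is a fin_num.
Proof.
move=> U2 V2; have Pfin : P setT \is a fin_num by exact: fin_num_measure.
by apply: covariance_fin_num; rewrite ?Lfun2_mul_Lfun1 // Lfun_subset12.
Qed.

Lemma covC U V : cov P U V = cov P V U.
Proof. by rewrite /cov covarianceC. Qed.

Lemma cov_cstl c Z : cov P (cst c) Z = 0.
Proof. by rewrite /cov covariance_cst_l. Qed.

Lemma covDl U V Z : U \in L2 -> V \in L2 -> Z \in L2 ->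
  cov P (U + V) Z = cov P U Z + cov P V Z.
Proof.
by move=> U2 V2 Z2; rewrite /cov covarianceDl // fineD // covariance_fin_num2.
Qed.

Lemma covZl a U Z : U \in L2 -> Z \in L2 -> cov P (a \o* U) Z = a * cov P U Z.
Proof.
move=> U2 Z2; have Pfin : P setT \is a fin_num by exact: fin_num_measure.
rewrite /cov covarianceZl ?Lfun2_mul_Lfun1 ?Lfun_subset12 //.
by rewrite fineM // covariance_fin_num2.
Qed.

Lemma Lfun2D U V : U \in L2 -> V \in L2 -> U + V \in L2.
Proof. by move=> U2 V2; rewrite rpredD ?lee1n. Qed.

Lemma Lfun2_sumZ (I : Type) (s : seq I) (a : I -> R) (F : I -> T -> R) :
  (forall i, F i \in L2) -> \sum_(i <- s) (a i \o* F i) \in L2.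
Proof.
move=> F2; elim: s => [|i s IH]; first by rewrite big_nil; exact: (Lfun_cst P 0 2).
by rewrite big_cons Lfun2D // Lfun_scale ?ler1n.
Qed.

Lemma cov_sumZl (I : Type) (s : seq I) (a : I -> R) (F : I -> T -> R) Z :
  (forall i, F i \in L2) -> Z \in L2 ->
  cov P (\sum_(i <- s) (a i \o* F i)) Z = \sum_(i <- s) a i * cov P (F i) Z.
Proof.
move=> F2 Z2; elim: s => [|i s IH]; first by rewrite !big_nil; exact: (cov_cstl 0).
have aF2 : a i \o* F i \in L2 by rewrite Lfun_scale ?ler1n.
rewrite !big_cons -IH.
by have -> := covDl aF2 (Lfun2_sumZ s a F2) Z2; rewrite covZl.
Qed.

End Covariance.

Section PartialCovariance.
Context {d : measure_display} {T : measurableType d} {R : realType}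
  (P : probability T R) {p : nat} (X : 'I_p -> T -> R).
Local Notation Sig := (covmx P X).

Lemma covmx_sym : Sig^T = Sig.
Proof. by apply/matrixP => i j; rewrite !mxE covC. Qed.

Lemma cov_X_X j k : cov P (X j) (X k) = ((delta_mx 0 j : 'rV_p) *m Sig) 0 k.
Proof. by rewrite -rowE !mxE. Qed.

Lemma pcov_rescovmxE (U V : T -> R) (a c : 'rV_p) e S :
  (forall k, cov P U (X k) = (a *m Sig) 0 k) ->
  (forall k, cov P V (X k) = (c *m Sig) 0 k) ->
  cov P U V = (a *m Sig *m c^T) 0 0 + e ->
  pcov P U V X S = (a *m rescovmx Sig S *m c^T) 0 0 + e.
Proof.
move=> covU covV covUV.
have crossE W w : (forall k, cov P W (X k) = (w *m Sig) 0 k) ->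
    crosscov P W X S = w *m Sig *m selmx S.
  by move=> covW; apply/rowP => i; rewrite mxE mulmx_selmx covW.
have subcovE : subcov P X S = subcovmx Sig S.
  by apply/matrixP => i j; rewrite mulmx_selmx trselmx_mulmx !mxE.
rewrite /pcov (crossE _ _ covU) (crossE _ _ covV) subcovE covUV addrAC.
by rewrite quad_rescovmxE // covmx_sym.
Qed.

Lemma pcov_set0 (U V : T -> R) : pcov P U V X finset.set0 = cov P U V.
Proof.
rewrite /pcov mxE big1 ?subr0 // => k _.
by have := ltn_ord k; rewrite [X in (_ < X)%N]cards0.
Qed.

Lemma cor_pcor_set0 (U V : T -> R) : cor P U V = pcor P U V X finset.set0.
Proof. by rewrite /pcor !pcov_set0. Qed.

End PartialCovariance.

Section PCsimpleCorrectness.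
Context {d : measure_display} {T : measurableType d} {R : realType}
  (P : probability T R) {p : nat} (Y : T -> R) (X : 'I_p -> T -> R).
Variable A : {set 'I_p}.
Implicit Types S : {set 'I_p}.
Hypothesis pcor_active : forall j, j \in A ->
  forall S, S \subset [set~ j] -> pcor P Y (X j) X S != 0.
Hypothesis pcor_inactive : forall j, j \notin A -> pcor P Y (X j) X A = 0.

Lemma pc_aux_subS k : pc_aux P Y X k.+1 \subset pc_aux P Y X k.
Proof. by apply/fintype.subsetP => j; rewrite inE => /andP[]. Qed.

Lemma sub_pc_aux k : A \subset pc_aux P Y X k.
Proof.
elim: k => [|k IH]; apply/fintype.subsetP => j jA.
  by rewrite inE (cor_pcor_set0 P X) pcor_active ?finset.sub0set.
rewrite /= inE (fintype.subsetP IH j jA).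
apply/forallP => S; apply/implyP => /andP[sS _].
apply: pcor_active => //; apply: fintype.subset_trans sS _.
by apply/fintype.subsetP => i; rewrite !inE => /andP[].
Qed.

Lemma pc_aux_card_sub : pc_aux P Y X #|A| \subset A.
Proof.
apply/fintype.subsetP => j; apply: contraTT => jA.
case def_k : #|A| => [|k] /=; rewrite inE.
  by rewrite (cor_pcor_set0 P X) -(cards0_eq def_k) pcor_inactive ?eqxx.
apply/nandP; right; apply/forallPn; exists A.
rewrite def_k eqxx andbT pcor_inactive // eqxx implybF negbK.
apply/fintype.subsetP => i iA.
rewrite !inE (fintype.subsetP (sub_pc_aux k) i iA) andbT.
by apply: contraNneq jA => <-.
Qed.

Lemma pc_aux_stable i : pc_aux P Y X (#|A| + i) = A.
Proof.
apply/eqP; rewrite finset.eqEsubset sub_pc_aux andbT.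
elim: i => [|i IH]; first by rewrite addn0 pc_aux_card_sub.
by rewrite addnS (fintype.subset_trans (pc_aux_subS _)).
Qed.

Lemma pcA_mreach : pcA P Y X (mreach P Y X) = A.
Proof.
rewrite /mreach; case: ex_minnP => m /andP[m_gt0 card_le] _; rewrite /pcA.
have [le_Am | lt_mA] := leqP #|A| m.-1.
  by rewrite -(subnKC le_Am) pc_aux_stable.
apply/eqP; rewrite eq_sym finset.eqEcard sub_pc_aux (leq_trans card_le) //.
by rewrite -(prednK m_gt0).
Qed.

End PCsimpleCorrectness.

Section LinearModel.
Context {d : measure_display} {T : measurableType d} {R : realType}
  (P : probability T R) {p : nat}.
Variables (X : 'I_p -> T -> R) (eps Y : T -> R) (sigma delta : R)
  (beta : 'I_p -> R).
Hypothesis X_L2 : forall j, X j \in Lfun P 2%:E.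
Hypothesis covmx_pd : forall v : 'rV[R]_p, v != 0 ->
  0 < (v *m covmx P X *m v^T) 0 0.
Hypothesis eps_L2 : eps \in Lfun P 2%:E.
Hypothesis var_eps : 'V_P[eps] = (sigma ^+ 2)%:E.
Hypothesis sigma_gt0 : 0 < sigma.
Hypothesis cov_X_eps : forall j, covariance P (X j) eps = 0%E.
Hypothesis Y_def : forall t, Y t = delta + \sum_(j < p) beta j * X j t + eps t.

Local Notation Sig := (covmx P X).
Local Notation b := (\row_j beta j : 'rV[R]_p).

Let Y_lincomb : Y = cst delta + \sum_j (beta j \o* X j) + eps.
Proof.
apply/funext => t; rewrite Y_def /= fct_sumE; congr (_ + _ + _).
by apply: eq_bigr => j _; rewrite mulrC.
Qed.

Let Y_L2 : Y \in Lfun P 2%:E.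
Proof. by rewrite Y_lincomb !Lfun2D ?Lfun2_sumZ ?Lfun_cst. Qed.

Lemma cov_Y_l Z : Z \in Lfun P 2%:E ->
  cov P Y Z = \sum_j beta j * cov P (X j) Z + cov P eps Z.
Proof.
move=> Z2; rewrite Y_lincomb.
have lincomb_L2 := Lfun2_sumZ (index_enum 'I_p) beta X_L2.
have -> := covDl (Lfun2D (Lfun_cst P delta 2) lincomb_L2) eps_L2 Z2.
have -> := covDl (Lfun_cst P delta 2) lincomb_L2 Z2.
by rewrite cov_cstl add0r cov_sumZl.
Qed.

Lemma cov_Y_X k : cov P Y (X k) = (b *m Sig) 0 k.
Proof.
rewrite cov_Y_l // covC /cov cov_X_eps addr0 mxE.
by apply: eq_bigr => j _; rewrite !mxE.
Qed.

Lemma cov_Y_Y : cov P Y Y = (b *m Sig *m b^T) 0 0 + sigma ^+ 2.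
Proof.
have cov_eps_Y : cov P eps Y = sigma ^+ 2.
  rewrite covC cov_Y_l // big1 ?add0r => [|j _]; last by rewrite /cov cov_X_eps mulr0.
  by rewrite /cov -/(variance P eps) var_eps.
rewrite cov_Y_l // cov_eps_Y mxE; congr (_ + _).
by apply: eq_bigr => j _; rewrite covC cov_Y_X !mxE mulrC.
Qed.

Lemma pcov_Y_X j S :
  pcov P Y (X j) X S = (b *m rescovmx Sig S *m (delta_mx 0 j : 'rV_p)^T) 0 0.
Proof.
rewrite -[RHS]addr0; apply: pcov_rescovmxE => [k | k |]; first exact: cov_Y_X.
  exact: cov_X_X.
by rewrite addr0 cov_Y_X trmx_delta -colE [RHS]mxE.
Qed.

Lemma pcov_X_X j S : pcov P (X j) (X j) X S
  = ((delta_mx 0 j : 'rV_p) *m rescovmx Sig S *m (delta_mx 0 j : 'rV_p)^T) 0 0.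
Proof.
rewrite -[RHS]addr0; apply: pcov_rescovmxE => [k | k |]; try exact: cov_X_X.
by rewrite addr0 cov_X_X trmx_delta -colE [RHS]mxE.
Qed.

Lemma pcov_Y_Y S :
  pcov P Y Y X S = (b *m rescovmx Sig S *m b^T) 0 0 + sigma ^+ 2.
Proof.
by apply: pcov_rescovmxE; [exact: cov_Y_X | exact: cov_Y_X | exact: cov_Y_Y].
Qed.

Lemma pcor_inactive_eq0 j :
  beta j = 0 -> pcor P Y (X j) X [set i | beta i != 0] = 0.
Proof.
move=> bj0; rewrite /pcor pcov_Y_X rescovmx_supported ?covmx_sym //.
  by rewrite mul0mx mxE mul0r.
by move=> k; rewrite inE negbK mxE => /eqP.
Qed.

Lemma pcor_setC1_neq0 j : beta j != 0 -> pcor P Y (X j) X [set~ j] != 0.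
Proof.
move=> bj0; rewrite /pcor pcov_Y_X pcov_X_X pcov_Y_Y rescovmx_setC1 ?covmx_sym //.
have j_notin : j \notin [set~ j] by rewrite !inE eqxx.
have res_gt0 := rescovmx_delta_gt0 (covmx_sym P X) covmx_pd j_notin.
have quad_ge0 := rescovmx_quad_ge0 (covmx_sym P X) covmx_pd [set~ j] b.
set s := (_ *m _ *m _) 0 0 in res_gt0 *.
rewrite mxE; apply: mulf_neq0; first by apply: mulf_neq0 => //; exact: lt0r_neq0.
rewrite invr_eq0; apply: lt0r_neq0; rewrite sqrtr_gt0 mulr_gt0 //.
exact: ltr_wpDl (exprn_gt0 _ sigma_gt0).
Qed.

Lemma pcor_active_neq0 (faithful : partially_faithful P Y X) j
    (S : {set 'I_p}) :
  beta j != 0 -> S \subset [set~ j] -> pcor P Y (X j) X S != 0.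
Proof.
move=> beta_j sub_S; apply: contra (pcor_setC1_neq0 beta_j) => /eqP pcor0.
by apply/eqP/faithful; exists S.
Qed.

End LinearModel.

Theorem theorem3 (d : measure_display) (T : measurableType d) (R : realType)
  (P : probability T R) (p : nat)
  (X : 'I_p -> {RV P >-> R}) (eps : {RV P >-> R})
  (sigma delta : R) (beta : 'I_p -> R) (Y : T -> R) :
  (forall j, (X j : T -> R) \in Lfun P 2%:E) ->
  (forall v : 'rV[R]_p, v != 0 ->
     0 < (v *m covmx P (fun j => (X j : T -> R)) *m v^T) 0 0) ->
  (eps : T -> R) \in Lfun P 2%:E ->
  ('E_P[eps] = 0)%E ->
  ('V_P[eps] = (sigma ^+ 2)%:E)%E -> 0 < sigma ->
  (forall j, covariance P (X j) eps = 0%E) ->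
  (forall t, Y t = delta + \sum_(j < p) beta j * X j t + eps t) ->
  partially_faithful P Y (fun j => (X j : T -> R)) ->
  pcA P Y (fun j => (X j : T -> R)) (mreach P Y (fun j => (X j : T -> R)))
    = [set j | beta j != 0].
Proof.
move=> X_L2 covmx_pd eps_L2 _ var_eps sigma_gt0 cov_X_eps Y_def faithful.
apply: pcA_mreach => j; rewrite inE ?negbK => beta_j.
  by move=> S; apply: (pcor_active_neq0 X_L2 covmx_pd eps_L2 var_eps sigma_gt0
    cov_X_eps Y_def faithful beta_j).
by apply: (pcor_inactive_eq0 X_L2 covmx_pd eps_L2 cov_X_eps Y_def); apply/eqP.
Qed.
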